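(* Let $n \ge 1$, $1 \le k \le 2^n$ and $0 \le q \le n$. Let $S^*_{k,n} = \{\mathrm{bin}(0),\mathrm{bin}(1),\ldots,\mathrm{bin}(k-1)\} \subseteq B_n$. Then $m_q(S^*_{k,n}) = \sum_{j=0}^{k-1} h_q(j)$, and for every set $S \subseteq B_n$ with $|S| = k$ we have $m_q(S) \le m_q(S^*_{k,n})$. That is, $S^*_{k,n}$ contains the maximum possible number of $q$-dimensional subcubes among all $k$-element subsets of $B_n$.
   Context: The $n$-cube is $B_n = \{0,1\}^n$; the coordinates of $x \in B_n$ are indexed $x = (x_{n-1},\ldots,x_1,x_0)$, and $x$ represents the integer $\sum_{i=0}^{n-1} x_i 2^i$. For $i \in [0:2^n-1]$, $\mathrm{bin}(i) \in B_n$ is the $n$-bit binary representation of $i$ (with leading zeros). $h(i)$ denotes the number of ones in $\mathrm{bin}(i)$, and $h_q(i) = \binom{h(i)}{q}$. A $q$-dimensional subcube of $B_n$ is a set of the form $\{x \in B_n : x_i = b(i) \text{ for all } i \in Q\}$, where $Q \subseteq [0:n-1]$ has size $n-q$ and $b : Q \to \{0,1\}$ is arbitrary. For $S \subseteq B_n$, $m_q(S)$ denotes the number of $q$-dimensional subcubes of $B_n$ contained in $S$. *)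

From mathcomp Require Import all_boot.
Set Implicit Arguments. Unset Strict Implicit. Unset Printing Implicit Defensive.

Definition cube (n : nat) : finType := {ffun 'I_n -> bool}.

Definition bin (n i : nat) : cube n := [ffun j : 'I_n => odd (i %/ 2 ^ j)].

Definition hw (n i : nat) : nat := #|[set j : 'I_n | bin n i j]|.

Definition hq (n q i : nat) : nat := 'C(hw n i, q).

Definition is_subcube (n q : nat) (C : {set cube n}) : bool :=
  [exists Q : {set 'I_n}, exists b : {ffun 'I_n -> bool},
     (#|Q| == n - q) && (C == [set x : cube n | [forall i in Q, x i == b i]])].

Definition mq (n q : nat) (S : {set cube n}) : nat :=
  #|[set C : {set cube n} | is_subcube q C && (C \subset S)]|.

Definition Sstar (n k : nat) : {set cube n} := [set bin n (val j) | j : 'I_k].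

(* A q-subcube is determined by its top vertex x together with its set D of q free
   directions, which lies in the support of x.  The initial segment S*_k is closed under
   passing to smaller numbers, so every x in S*_k is the top of exactly C(h(x), q)
   subcubes inside S*_k; this gives the formula for m_q(S*_k).

   For an arbitrary S with |S| >= 2 pick a coordinate i on which S is not constant and
   split S into the slices S_0 and S_1.  A subcube of S either lies in one slice or uses
   direction i; in the latter case its bottom face is a (q-1)-subcube of the set P of
   points of S_0 whose i-neighbour lies in S_1, and |P| <= min(|S_0|, |S_1|).  By
   induction on |S|, m_q(S) <= f_q(|S|) with f_q(k) := sum_{j<k} C(h(j), q), provided
     f_q(a) + f_q(b) + f_{q-1}(min(a, b)) <= f_q(a + b),
   which holds by induction on a + b, using the recursions for f_q(2m) and f_q(2m+1)
   obtained by splitting off the lowest bit. *)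

From mathcomp Require Import all_boot zify.
Set Implicit Arguments. Unset Strict Implicit. Unset Printing Implicit Defensive.

Definition bitcount (n j : nat) : nat := \sum_(i < n) odd (j %/ 2 ^ i).

Definition popcount (j : nat) : nat := bitcount j j.

Lemma bitcountS n j : bitcount n.+1 j = odd j + bitcount n j./2.
Proof.
rewrite /bitcount big_ord_recl expn0 divn1; congr (_ + _).
by apply: eq_bigr => i _; rewrite /bump /= expnS divnMA divn2.
Qed.

Lemma bitcount_widen n m j : j < 2 ^ n -> bitcount (n + m) j = bitcount n j.
Proof.
move=> lt_j; elim: m => [|m IHm]; first by rewrite addn0.
rewrite addnS /bitcount big_ord_recr /= -/(bitcount _ _) IHm divn_small ?addn0 //.
by apply: leq_trans lt_j _; rewrite leq_exp2l ?leq_addr.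
Qed.

Lemma popcountE n j : j < 2 ^ n -> popcount j = bitcount n j.
Proof.
move=> lt_j_n; have lt_j_j : j < 2 ^ j by apply: ltn_expl.
have [le_nj | lt_jn] := leqP n j.
- by rewrite /popcount -{1}(subnKC le_nj) bitcount_widen.
- by rewrite /popcount -(subnKC (ltnW lt_jn)) bitcount_widen.
Qed.

Lemma popcount_bit_double (b : bool) j : popcount (b + j.*2) = b + popcount j.
Proof.
have lt_j : j < 2 ^ j by apply: ltn_expl.
rewrite (@popcountE j.+1) ?bitcountS; last by rewrite expnS; case: b; lia.
by rewrite oddD odd_double half_bit_double addbF (popcountE lt_j); case: b.
Qed.

Lemma popcount_double j : popcount j.*2 = popcount j.
Proof. exact: (popcount_bit_double false). Qed.

Lemma popcount_doubleS j : popcount j.*2.+1 = (popcount j).+1.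
Proof. exact: (popcount_bit_double true). Qed.

Lemma hw_popcount n j : j < 2 ^ n -> hw n j = popcount j.
Proof.
move=> lt_j; rewrite /hw -sum1dep_card big_mkcond (popcountE lt_j) /bitcount.
by apply: eq_bigr => i _; rewrite ffunE; case: odd.
Qed.

Lemma sum_bits n j : \sum_(i < n) odd (j %/ 2 ^ i) * 2 ^ i = j %% 2 ^ n.
Proof.
elim: n => [|n IHn]; first by rewrite big_ord0 expn0 modn1.
rewrite big_ord_recr /= IHn; set r := j %% 2 ^ n.+1.
have -> : j %% 2 ^ n = r %% 2 ^ n by rewrite modn_dvdm // expnS dvdn_mull.
have -> : odd (j %/ 2 ^ n) = r %/ 2 ^ n :> nat by rewrite -modn2 modn_divl -expnS.
by rewrite addnC -divn_eq.
Qed.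

(* The shift by one makes Pascal's rule [binom_predS] hold for every q, so that
   [hsum q.+1 k] is f_q(k) and [hsum q k] is f_{q-1}(k) with no case split on q. *)
Definition binom_pred (h q : nat) : nat := if q is q'.+1 then 'C(h, q') else 0.

Definition hsum (q k : nat) : nat := \sum_(j < k) binom_pred (popcount j) q.

Lemma binom_predS h q : binom_pred h.+1 q = binom_pred h q + binom_pred h q.-1.
Proof. by case: q => [|[|q]] //=; rewrite ?bin0 ?binS. Qed.

Lemma hsumq0 q : hsum q 0 = 0.
Proof. by rewrite /hsum big_ord0. Qed.

Lemma hsumS q k : hsum q k.+1 = hsum q k + binom_pred (popcount k) q.
Proof. by rewrite /hsum big_ord_recr. Qed.

Lemma hsum0k k : hsum 0 k = 0.
Proof. by rewrite /hsum big1. Qed.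

Lemma hsum1k k : hsum 1 k = k.
Proof.
by rewrite /hsum (eq_bigr (fun=> 1)) ?sum_nat_const ?card_ord ?muln1 // => j _; rewrite /= bin0.
Qed.

Lemma leq_hsum q : {homo hsum q : m n / m <= n}.
Proof.
move=> m n /subnKC <-; elim: (n - m) => [|d IHd]; first by rewrite addn0.
by rewrite addnS hsumS (leq_trans IHd) ?leq_addr.
Qed.

Lemma hsum_double q m : hsum q m.*2 = (hsum q m).*2 + hsum q.-1 m.
Proof.
elim: m => [|m IHm]; first by rewrite !hsumq0.
rewrite doubleS !hsumS IHm popcount_doubleS popcount_double binom_predS; lia.
Qed.

Lemma hsum_doubleS q m : hsum q m.*2.+1 = hsum q m.+1 + hsum q m + hsum q.-1 m.
Proof. rewrite hsumS hsum_double hsumS popcount_double; lia. Qed.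

Lemma double_or_doubleS a : exists x, a = x.*2 \/ a = x.*2.+1.
Proof. by exists a./2; rewrite -{1 3}[a]odd_double_half; case: (odd a); [right|left]. Qed.

Lemma hsum_split q a b :
  b <= a -> hsum q a + hsum q b + hsum q.-1 b <= hsum q (a + b).
Proof.
have [s] := ubnP (a + b); elim: s => // s IHs in q a b *.
rewrite ltnS => le_ab_s le_ba.
have IH q' a' b' : b' <= a' -> a' + b' < a + b ->
    hsum q' a' + hsum q' b' + hsum q'.-1 b' <= hsum q' (a' + b').
  by move=> le_b'a' lt_ab'; apply: IHs; [apply: leq_trans le_ab_s|].
have [-> | lt_ba] := eqVneq b a.
  by rewrite [a + a]addnn hsum_double addnn.
have {le_ba}lt_ba : b < a by rewrite ltn_neqAle lt_ba.
have [-> | b_gt0] := posnP b; first by rewrite !hsumq0 !addn0.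
have [x [] ea] := double_or_doubleS a; have [y [] eb] := double_or_doubleS b; subst a b.
- have h1 := IH q x y ltac:(lia) ltac:(lia).
  have h2 := IH q.-1 x y ltac:(lia) ltac:(lia).
  rewrite -doubleD !hsum_double; lia.
- have h1 := IH q x y.+1 ltac:(lia) ltac:(lia).
  have h2 := IH q x y ltac:(lia) ltac:(lia).
  have h3 := IH q.-1 x y ltac:(lia) ltac:(lia).
  rewrite addnS -doubleD !hsum_double !hsum_doubleS -addnS; lia.
- have h1 := IH q x.+1 y ltac:(lia) ltac:(lia).
  have h2 := IH q x y ltac:(lia) ltac:(lia).
  have h3 := IH q.-1 x y ltac:(lia) ltac:(lia).
  rewrite addSn -doubleD !hsum_double !hsum_doubleS -addSn; lia.
- have h1 := IH q x.+1 y ltac:(lia) ltac:(lia).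
  have h2 := IH q x y.+1 ltac:(lia) ltac:(lia).
  have h3 := IH q.-1 x y ltac:(lia) ltac:(lia).
  have h4 := leq_hsum q.-1 (leqnSn (x + y)).
  have -> : x.*2.+1 + y.*2.+1 = (x + y).+1.*2 by lia.
  rewrite hsum_double !hsum_doubleS.
  rewrite addSn in h1; rewrite addnS in h2; lia.
Qed.

Lemma hsum_min q a b :
  hsum q.+1 a + hsum q.+1 b + hsum q (minn a b) <= hsum q.+1 (a + b).
Proof.
have [le_ba | /ltnW le_ab] := leqP b a; first exact: hsum_split.
by have := hsum_split q.+1 le_ab; rewrite [b + a]addnC /=; lia.
Qed.

Section Subcubes.

Variable n : nat.
Implicit Types (x y z : cube n) (D : {set 'I_n}) (S : {set cube n}) (i j : 'I_n).

Definition subcube x D : {set cube n} :=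
  [set y : cube n | [forall (j | j \notin D), y j == x j]].

Definition supp x : {set 'I_n} := [set j | x j].

(* A subcube is represented by its top vertex and its set of free directions; asking the
   free directions to lie in the support of the top vertex makes this unique. *)
Definition top_reps (q : nat) S : {set cube n * {set 'I_n}} :=
  [set p : cube n * {set 'I_n} |
     [&& #|p.2| == q, p.2 \subset supp p.1 & subcube p.1 p.2 \subset S]].

Definition flip i x : cube n := [ffun j => if j == i then ~~ x j else x j].

Lemma subcubeP y x D : reflect (forall j, j \notin D -> y j = x j) (y \in subcube x D).
Proof.
rewrite inE; apply: (iffP forallP) => [eq_yx j jD | eq_yx j].
- by have /implyP/(_ jD)/eqP := eq_yx j.
- by apply/implyP => /eq_yx ->.
Qed.

Lemma subcube_self x D : x \in subcube x D.
Proof. exact/subcubeP. Qed.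

Lemma flip_subcube x D i : i \in D -> flip i x \in subcube x D.
Proof.
move=> iD; apply/subcubeP => j jD; rewrite ffunE.
by case: eqP => // eq_ji; rewrite eq_ji iD in jD.
Qed.

Lemma flipK i : involutive (flip i).
Proof. by move=> x; apply/ffunP => j; rewrite !ffunE; case: eqP; rewrite ?negbK. Qed.

Lemma flip_inj i : injective (flip i).
Proof. exact: inv_inj (flipK i). Qed.

Lemma subcube_subset x D x' D' : subcube x D \subset subcube x' D' -> D \subset D'.
Proof.
move=> /subsetP sub; apply/subsetP => i iD; apply/negPn/negP => iD'.
have /subcubeP/(_ i iD') := sub _ (flip_subcube x iD).
have /subcubeP/(_ i iD') := sub _ (subcube_self x D).
by rewrite ffunE eqxx => ->; case: (x' i).
Qed.

Lemma subcube_inj x D x' D' : D \subset supp x -> D' \subset supp x' ->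
  subcube x D = subcube x' D' -> x = x' /\ D = D'.
Proof.
move=> Dx D'x' eq_cubes.
have eq_D : D = D'.
  apply/eqP; rewrite eqEsubset.
  by rewrite (@subcube_subset x D x' D') ?(@subcube_subset x' D' x D) ?eq_cubes.
split=> //; subst D'; apply/ffunP => j; have [jD | jD] := boolP (j \in D).
- by move: (subsetP Dx j jD) (subsetP D'x' j jD); rewrite !inE => -> ->.
- by have := subcube_self x D; rewrite eq_cubes => /subcubeP/(_ j jD).
Qed.

Lemma is_subcube_subcube x D : is_subcube #|D| (subcube x D).
Proof.
apply/existsP; exists (~: D); apply/existsP; exists x.
rewrite -[n in n - _]card_ord -(cardsC D) addKn eqxx; apply/eqP/setP => y.
by rewrite !inE; apply: eq_forallb => j; rewrite inE.
Qed.

Lemma is_subcube_top q C : q <= n -> is_subcube q C ->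
  exists x D, [/\ #|D| = q, D \subset supp x & C = subcube x D].
Proof.
move=> le_qn /existsP [Q /existsP [b /andP [/eqP card_Q /eqP ->]]].
exists [ffun j => (j \notin Q) || b j], (~: Q); split.
- by have := cardsC Q; rewrite card_ord card_Q => /(canRL (addKn _)) ->; rewrite subKn.
- by apply/subsetP => j; rewrite !inE ffunE => ->.
- apply/setP => y; rewrite !inE; apply: eq_forallb => j.
  by rewrite inE negbK ffunE; case: (j \in Q).
Qed.

Lemma mq_top_reps q S : q <= n -> mq q S = #|top_reps q S|.
Proof.
move=> le_qn; rewrite /mq -(card_in_imset (f := fun p => subcube p.1 p.2)).
  apply: eq_card => C; rewrite inE; apply/andP/imsetP.
  - case=> /(is_subcube_top le_qn) [x [D [card_D Dx ->]]] sub_S.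
    by exists (x, D); rewrite // inE card_D eqxx Dx.
  - case=> -[x D]; rewrite inE => /and3P [/eqP <- _ sub_S] ->.
    by rewrite is_subcube_subcube.
move=> [x D] [x' D']; rewrite !inE /= => /and3P [_ Dx _] /and3P [_ D'x' _].
by move=> /(subcube_inj Dx D'x') [-> ->].
Qed.

Lemma card_top_reps_le1 q S : #|S| <= 1 -> #|top_reps q S| <= hsum q.+1 #|S|.
Proof.
move=> /card_le1_eqP S_le1.
have no_free p : p \in top_reps q S -> p = (p.1, set0) /\ p.1 \in S.
  case: p => x D; rewrite inE /= => /and3P [_ _ /subsetP sub_S].
  split; last exact/sub_S/subcube_self.
  congr (_, _); apply/setP => i; rewrite inE; apply/negbTE/negP => iD.
  have /ffunP/(_ i) := S_le1 _ _ (sub_S _ (flip_subcube x iD)) (sub_S _ (subcube_self x D)).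
  by rewrite ffunE eqxx; case: (x i).
case: q no_free => [|q] no_free.
- rewrite hsum1k; apply: leq_trans (leq_imset_card (fun x => (x, set0)) S).
  apply/subset_leq_card/subsetP => p /no_free [-> xS]; exact: imset_f.
- rewrite (_ : top_reps q.+1 S = set0) ?cards0 //; apply/setP => p.
  rewrite in_set0; apply/negbTE/negP => /[dup] /no_free [-> _].
  by rewrite inE /= cards0.
Qed.

Definition slice S i b : {set cube n} := [set z in S | z i == b].

Definition paired S i : {set cube n} := [set z in S | ~~ z i & flip i z \in S].

Lemma card_slices S i : #|slice S i true| + #|slice S i false| = #|S|.
Proof.
rewrite -(cardsID [set z : cube n | z i] S); congr (_ + _); apply: eq_card => z.
  by rewrite !inE eqb_id.
by rewrite !inE eqbF_neg andbC.
Qed.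

Lemma card_paired_le S i : #|paired S i| <= minn #|slice S i true| #|slice S i false|.
Proof.
rewrite leq_min; apply/andP; split.
- rewrite -(card_imset _ (@flip_inj i)); apply/subset_leq_card/subsetP => w /imsetP [z].
  by rewrite !inE => /and3P [_ zi fzS] ->; rewrite fzS ffunE eqxx zi.
- by apply/subset_leq_card/subsetP => z; rewrite !inE eqbF_neg => /and3P [-> -> _].
Qed.

Lemma card_top_reps_split q S i :
  #|top_reps q S| <= #|top_reps q (slice S i true)| + #|top_reps q (slice S i false)|
                     + #|[set p in top_reps q S | i \in p.2]|.
Proof.
pose fixed b := [set p in top_reps q S | (i \notin p.2) && (p.1 i == b)].
have sub_fixed b : fixed b \subset top_reps q (slice S i b).
  apply/subsetP => -[x D]; rewrite !inE /= => /andP [/and3P [-> -> sub_S] /andP [iD /eqP <-]].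
  apply/subsetP => w w_sub; rewrite inE (subsetP sub_S _ w_sub).
  by move/subcubeP: w_sub => /(_ i iD) ->; rewrite eqxx.
apply: (@leq_trans #|fixed true :|: fixed false :|: [set p in top_reps q S | i \in p.2]|).
  apply/subset_leq_card/subsetP => p; rewrite /fixed !inE => p_rep; rewrite p_rep /=.
  by case: (i \in p.2); case: (p.1 i).
apply: leq_trans (leq_card_setU _ _) _; rewrite leq_add2r.
by apply: leq_trans (leq_card_setU _ _) _; apply: leq_add; apply: subset_leq_card.
Qed.

Lemma card_top_reps_free q S i :
  #|[set p in top_reps q.+1 S | i \in p.2]| <= #|top_reps q (paired S i)|.
Proof.
pose drop_i (p : cube n * {set 'I_n}) := (flip i p.1, p.2 :\ i).
have drop_i_inj : {in [set p in top_reps q.+1 S | i \in p.2] &, injective drop_i}.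
  move=> [x D] [x' D']; rewrite !inE /= => /andP [_ iD] /andP [_ iD'] [/flip_inj -> eq_D].
  by rewrite -(setD1K iD) -(setD1K iD') eq_D.
rewrite -(card_in_imset drop_i_inj); apply/subset_leq_card/subsetP => p /imsetP [[x D]].
rewrite !inE /= => /andP [/and3P [card_D Dx /subsetP sub_S] iD] ->.
have xi : x i by move/subsetP: Dx => /(_ i iD); rewrite inE.
apply/and3P; split.
- by rewrite (cardsD1 i D) iD in card_D.
- apply/subsetP => j; rewrite !inE ffunE => /andP [/negbTE -> jD].
  by move/subsetP: Dx => /(_ j jD); rewrite inE.
- apply/subsetP => w /subcubeP w_sub.
  have w_x j : j \notin D -> w j = x j.
    move=> jD; have ji : j != i by apply: contraNneq jD => ->.
    by rewrite w_sub ?ffunE ?(negbTE ji) // !inE negb_and jD orbT.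
  have wi : w i = false by rewrite w_sub ?ffunE ?eqxx ?xi // !inE eqxx.
  rewrite !inE wi sub_S /=; last exact/subcubeP.
  apply: sub_S; apply/subcubeP => j jD; rewrite ffunE.
  have ji : j != i by apply: contraNneq jD => ->.
  by rewrite (negbTE ji) w_x.
Qed.

Lemma card_top_reps_le q S : #|top_reps q S| <= hsum q.+1 #|S|.
Proof.
have [m] := ubnP #|S|; elim: m => // m IHm in q S *; rewrite ltnS => le_S_m.
have [S_le1 | /card_gt1P [x [y [xS yS neq_xy]]]] := leqP #|S| 1.
  exact: card_top_reps_le1.
have [i neq_xy_i] : exists i, x i != y i.
  apply/existsP; apply: contraNT neq_xy => /existsPn eq_xy.
  by apply/eqP/ffunP => j; apply/eqP; rewrite -[_ == _]negbK eq_xy.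
have lt_slice b : #|slice S i b| < #|S|.
  have slice_gt0 : 0 < #|slice S i (~~ b)|.
    apply/card_gt0P; have [<- | neq_xb] := eqVneq (x i) (~~ b).
      by exists x; rewrite inE xS eqxx.
    by exists y; rewrite inE yS; move: neq_xy_i neq_xb; case: (x i); case: (y i); case: b.
  by rewrite -(card_slices S i); move: slice_gt0; case: b => /=; lia.
have le_free : #|[set p in top_reps q S | i \in p.2]| <= hsum q #|paired S i|.
  case: q => [|q].
  - rewrite hsum0k leqn0 cards_eq0; apply/eqP/setP => -[x' D]; rewrite !inE /= andbC.
    by case: (boolP (i \in D)) => //= iD; rewrite (cardsD1 i D) iD.
  - apply: leq_trans (card_top_reps_free q S i) (IHm _ _ _).
    have := card_paired_le S i; have := lt_slice false; lia.
have le_slice b : #|top_reps q (slice S i b)| <= hsum q.+1 #|slice S i b|.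
  exact/IHm/(leq_trans (lt_slice b)).
have := hsum_min q #|slice S i true| #|slice S i false|; rewrite card_slices.
have := leq_hsum q (card_paired_le S i); have := card_top_reps_split q S i.
have := le_slice true; have := le_slice false; lia.
Qed.

Definition num x : nat := \sum_(i < n) x i * 2 ^ i.

Lemma num_subcube_le x D y : D \subset supp x -> y \in subcube x D -> num y <= num x.
Proof.
move=> Dx /subcubeP y_x; apply: leq_sum => i _; rewrite leq_mul2r; apply/orP; right.
have [iD | iD] := boolP (i \in D); last by rewrite y_x.
by move: (subsetP Dx i iD); rewrite inE => ->; case: (y i).
Qed.

Lemma card_top_reps_down q S :
    (forall x D, x \in S -> D \subset supp x -> subcube x D \subset S) ->
  #|top_reps q S| = \sum_(x in S) 'C(#|supp x|, q).
Proof.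
move=> down_S.
pose reps_at x := [set D : {set 'I_n} | D \subset supp x & #|D| == q].
rewrite -sum1_card (eq_bigl (fun p => (p.1 \in S) && (p.2 \in reps_at p.1))); last first.
  move=> [x D]; rewrite !inE /=.
  apply/and3P/and3P => -[card_D Dx sub_S]; split=> //.
  - exact: (subsetP sub_S) (subcube_self x D).
  - exact: down_S.
rewrite -(pair_big_dep (mem S) (fun x => mem (reps_at x)) (fun _ _ => 1)) /=.
by apply: eq_bigr => x _; rewrite sum1_card cards_draws.
Qed.

Lemma num_bin (j : nat) : j < 2 ^ n -> num (bin n j) = j.
Proof.
by move=> lt_j; rewrite /num; under eq_bigr do rewrite ffunE; rewrite sum_bits modn_small.
Qed.

Lemma bin_num x : bin n (num x) = x.
Proof.
have bin_inj : injective (fun j : 'I_(2 ^ n) => bin n j).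
  by move=> j j' /(congr1 num); rewrite !num_bin ?ltn_ord //; apply: val_inj.
have card_cube : #|cube n| <= #|'I_(2 ^ n)|.
  by rewrite /cube card_ffun card_bool !card_ord.
have /codomP [j ->] := inj_card_onto bin_inj card_cube x.
by rewrite num_bin.
Qed.

Lemma mem_Sstar k x : k <= 2 ^ n -> (x \in Sstar n k) = (num x < k).
Proof.
move=> le_k; apply/imsetP/idP => [[j _ ->] | lt_x].
- by rewrite num_bin ?ltn_ord // (leq_trans (ltn_ord j)).
- by exists (Ordinal lt_x); rewrite ?bin_num.
Qed.

Lemma card_top_reps_Sstar k q :
  k <= 2 ^ n -> #|top_reps q (Sstar n k)| = \sum_(j < k) hq n q j.
Proof.
move=> le_k; rewrite card_top_reps_down.
  rewrite big_imset //= => j j' _ _ /(congr1 num).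
  by rewrite !num_bin ?(leq_trans (ltn_ord _) le_k) //; apply: val_inj.
move=> x D; rewrite !mem_Sstar // => lt_x Dx; apply/subsetP => y y_x.
by rewrite mem_Sstar // (leq_ltn_trans (num_subcube_le Dx y_x)).
Qed.

End Subcubes.

Theorem theorem1 (n k q : nat) :
  1 <= n -> 1 <= k <= 2 ^ n -> q <= n ->
  mq q (Sstar n k) = \sum_(j < k) hq n q j /\
  (forall S : {set cube n}, #|S| = k -> mq q S <= mq q (Sstar n k)).
Proof.
move=> _ /andP [_ le_k] le_qn.
have mq_Sstar : mq q (Sstar n k) = \sum_(j < k) hq n q j.
  by rewrite mq_top_reps // card_top_reps_Sstar.
split=> // S card_S; rewrite mq_Sstar mq_top_reps //.
apply: leq_trans (card_top_reps_le q S) _; rewrite card_S; apply: eq_leq.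
by apply: eq_bigr => j _; rewrite /hq hw_popcount // (leq_trans (ltn_ord j)).
Qed.
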